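(* Let $p$ be a prime and $w,e\in\mathbb Z_{\ge0}$. Let $\mathcal W=\{g\in S_p\wr S_w: C_{S_{pw+e}}(g_p)\le (S_p\wr S_w)\times S_e\}$, where $g_p$ denotes the $p$-part of $g$. If $e=0$ then $\mathcal W=\mathcal U_{w-1}$, and if $e>0$ then $\mathcal W=\mathcal U_w$.
   Context: $S_{pw+e}$ acts on $[1,pw+e]$; $S_p\wr S_w$ is the subgroup of permutations fixing $pw+1,\dots,pw+e$ and stabilising the family $\{[1,p],[p+1,2p],\dots,[(w-1)p+1,wp]\}$; $S_e$ is the group of permutations of $\{pw+1,\dots,pw+e\}$. Elements of $S_p\wr S_w$ are written $(x_1,\dots,x_w;\sigma)$ ($x_i\in S_p$, $\sigma\in S_w$), with multiplication $(x_1,\dots,x_w;\sigma)(y_1,\dots,y_w;\tau)=(x_1y_{\sigma^{-1}(1)},\dots,x_wy_{\sigma^{-1}(w)};\sigma\tau)$. A marked cycle in $S_w$ is either a non-identity cycle (its support being the set of moved points) or an element $j\in[1,w]$ (support $\{j\}$, treated as the identity permutation); its order $o(\sigma)$ is the size of its support. For a marked cycle $\sigma$ with smallest support element $i$ and $x\in S_p$, $y_\sigma(x)=(1,\dots,1,x,1,\dots,1;\sigma)$ with $x$ in position $i$. Every $h\in S_p\wr S_w$ is conjugate in $S_p\wr S_w$ to some $y_{\sigma_1}(x_1)\cdots y_{\sigma_r}(x_r)$ where $\sigma_1,\dots,\sigma_r$ are marked cycles whose supports partition $[1,w]$; $\operatorname{tp}^{\mathrm{wr}}_p(h)$ is the partition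 formed by the numbers $o(\sigma_l)$ for those $l$ with $x_l$ a $p$-cycle (this is well defined). For $s\in\mathbb Z$, $\mathcal U_s=\{h\in S_p\wr S_w: |\operatorname{tp}^{\mathrm{wr}}_p(h)|\ge s\}$. *)

From mathcomp Require Import all_boot fingroup perm pgroup.
Unset Printing Implicit Defensive.

(* Points [1, pw+e] of the paper are represented by 'I_(p*w+e) = {0,...,pw+e-1};
   block i (i : 'I_w) is {x | x %/ p = i} = [ip, ip+p-1], tail is {x | pw <= x}. *)

Definition blk (p w e : nat) (i : 'I_w) : {set 'I_(p * w + e)} :=
  [set x : 'I_(p * w + e) | x %/ p == i].

Definition blk_family (p w e : nat) : {set {set 'I_(p * w + e)}} :=
  [set blk p w e i | i : 'I_w].

Definition wr (p w e : nat) : {set {perm 'I_(p * w + e)}} :=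
  [set s : {perm 'I_(p * w + e)} |
     [forall x : 'I_(p * w + e), (p * w <= x) ==> (s x == x)] &&
     ([set (s @: B) | B : {set 'I_(p * w + e)} in blk_family p w e] == blk_family p w e)].

Definition symE (p w e : nat) : {set {perm 'I_(p * w + e)}} :=
  [set s : {perm 'I_(p * w + e)} | [forall x : 'I_(p * w + e), (x < p * w) ==> (s x == x)]].

(* g is the permutation (xs_1,...,xs_w ; sg), i.e. point (block i, position a)
   goes to (block sg i, position xs_(sg i) a); tail points are fixed. *)
Definition wr_elt (p w e : nat) (g : {perm 'I_(p * w + e)})
  (xs : {ffun 'I_w -> {perm 'I_p}}) (sg : {perm 'I_w}) : bool :=
  [forall x : 'I_(p * w + e), (p * w <= x) ==> (g x == x)] &&
  [forall i : 'I_w, forall a : 'I_p, forall x : 'I_(p * w + e),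
     (val x == p * i + a) ==> (val (g x) == p * sg i + xs (sg i) a)].

Definition is_pcycle (p : nat) (x : {perm 'I_p}) : bool :=
  [exists a : 'I_p, #|porbit x a| == p].

Definition orbit_min (w : nat) (sg : {perm 'I_w}) (i : 'I_w) : bool :=
  [forall j in porbit sg i, i <= j].

(* U_s = { h in S_p wr S_w : |tp^wr_p(h)| >= s }, where h is conjugate in
   S_p wr S_w to y_{s_1}(x_1)...y_{s_r}(x_r) = (xs ; sg) with xs supported on
   the orbit minima of sg, and |tp| = sum of the orders of the marked cycles
   whose label is a p-cycle. *)
Definition Uset (p w e : nat) (s : nat) : {set {perm 'I_(p * w + e)}} :=
  [set h in wr p w e |
    [exists k in wr p w e, exists xs : {ffun 'I_w -> {perm 'I_p}},
      exists sg : {perm 'I_w},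
      [&& wr_elt p w e (h ^ k)%g xs sg,
          [forall i : 'I_w, ~~ orbit_min w sg i ==> (xs i == 1%g)] &
          (s <= \sum_(i : 'I_w | orbit_min w sg i && is_pcycle p (xs i))
                   #|porbit sg i|)]]].

Definition calW (p w e : nat) : {set {perm 'I_(p * w + e)}} :=
  [set g in wr p w e | ('C[g.`_p] \subset wr p w e * symE p w e)%g].

(** For g in S_p wr S_w call a block full if it lies in a single cycle of g.
    A g-cycle through block j has length r * m, where m is the length of the
    cycle of j in the induced permutation of the blocks and r <= p is the number
    of points it has in block j; the block is full iff r = p.  The p-part
    z = g_p has cycles of length the p-parts of those of g: on a full block a
    power of z acts as a p-cycle, while on a non-full block r is prime to p, so
    z never moves a point of that block to another point of it.
    If two blocks are non-full, or one is and there is a tail point (e > 0), a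
    transposition of two z-fixed points, or the restriction of z to one of its
    cycles, centralises z but breaks the block system.  Otherwise z fixes the
    non-full block pointwise and every element centralising z permutes the full
    blocks, each of which is an orbit of a power of z.
    Finally |tp^wr_p(g)| is the number of full blocks: this number is invariant
    under conjugation in the wreath product, and for an element in normal form
    the blocks of the marked cycle labelled x_l are full iff x_l is a p-cycle. *)

From mathcomp Require Import all_boot fingroup perm action pgroup zify.

Set Implicit Arguments.
Unset Strict Implicit.

Lemma dvdn_mul_gcd a m t : 0 < m -> (m %| a * t) = (m %/ gcdn a m %| t).
Proof.
move=> m_gt0; set d := gcdn a m; have d_gt0 : 0 < d by rewrite gcdn_gt0 m_gt0 orbT.
have {1}-> : m = m %/ d * d by rewrite divnK ?dvdn_gcdr.
have {1}-> : a = a %/ d * d by rewrite divnK ?dvdn_gcdl.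
rewrite mulnAC dvdn_pmul2r // Gauss_dvdr // /coprime -(eqn_pmul2r d_gt0) mul1n.
by rewrite muln_gcdl !divnK ?dvdn_gcdl ?dvdn_gcdr // gcdnC.
Qed.

Section PermCycles.
Variable T : finType.
Implicit Types (s : {perm T}) (x y : T).

Lemma card_porbit_gt0 s x : 0 < #|porbit s x|.
Proof. by rewrite lt0n card_porbit_neq0. Qed.

Lemma permX_fix s x k : ((s ^+ k)%g x == x) = (#|porbit s x| %| k).
Proof.
set L := #|porbit s x|; have L_gt0 : 0 < L := card_porbit_gt0 s x.
have fixL q : (s ^+ (q * L))%g x = x.
  by rewrite mulnC expgM permX iter_fix // permX iter_porbit.
have nthE i : i < L -> nth x (traject s x L) i = (s ^+ i)%g x.
  by move=> ?; rewrite nth_traject // permX.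
have {2}-> : x = nth x (traject s x L) 0 by rewrite nthE // expg0 perm1.
rewrite {1}(divn_eq k L) expgD permM fixL -nthE ?ltn_pmod //.
by rewrite nth_uniq ?size_traject ?ltn_pmod ?uniq_traject_porbit.
Qed.

Lemma card_porbitX s x k :
  #|porbit (s ^+ k)%g x| = #|porbit s x| %/ gcdn k #|porbit s x|.
Proof.
have L_gt0 := card_porbit_gt0 s x.
have dvd_orbitX t : (#|porbit (s ^+ k)%g x| %| t) = (#|porbit s x| %| k * t).
  by rewrite -!permX_fix expgM.
apply/eqP; rewrite eqn_dvd dvd_orbitX dvdn_mul_gcd // dvdnn /=.
by rewrite -dvdn_mul_gcd // -dvd_orbitX.
Qed.

Lemma mem_porbit_perm s x y : (s y \in porbit s x) = (y \in porbit s x).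
Proof.
have -> : s y = (s ^+ 1)%g y by rewrite expg1.
by rewrite porbit_sym porbit_perm porbit_sym.
Qed.

Lemma subset_porbitE s (A : {set T}) x y :
  x \in A -> y \in A -> (A \subset porbit s x) = (A \subset porbit s y).
Proof.
wlog suff: x y / x \in A -> y \in A -> A \subset porbit s x -> A \subset porbit s y.
  by move=> sub xA yA; apply/idP/idP; apply: sub.
move=> xA yA sub_x; have /eqP <- // : porbit s x == porbit s y.
by rewrite eq_porbit_mem porbit_sym (subsetP sub_x).
Qed.

Lemma porbit_astabs s x : s \in 'N(porbit s x | 'P)%g.
Proof. by apply/astabsP => y; rewrite /= mem_porbit_perm. Qed.

Lemma commute_tperm s x y : s x = x -> s y = y -> commute (tperm x y) s.
Proof. by move=> sx sy; apply/commgP/conjg_fixP; rewrite tpermJ sx sy. Qed.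

Lemma commute_permX c s k x : commute c s -> c ((s ^+ k)%g x) = (s ^+ k)%g (c x).
Proof. by move/(commuteX k) => csk; rewrite -permM -csk permM. Qed.

Lemma porbit_commute c s x : commute c s -> porbit s (c x) = c @: porbit s x.
Proof.
move=> cs; apply/setP => y; apply/porbitP/imsetP => [[k ->] | [_ /porbitP[k ->] ->]].
  by exists ((s ^+ k)%g x); rewrite ?mem_porbit ?commute_permX.
by exists k; rewrite commute_permX.
Qed.

Lemma commute_fixE c s x : commute c s -> (s (c x) == c x) = (s x == x).
Proof. by move=> cs; rewrite -[s x == x](inj_eq (@perm_inj _ c)) -!permM cs. Qed.

Lemma porbitJ s c x : porbit (s ^ c)%g (c x) = c @: porbit s x.
Proof.
apply/setP => y; apply/porbitP/imsetP => [[k ->] | [_ /porbitP[k ->] ->]].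
  by exists ((s ^+ k)%g x); rewrite ?mem_porbit // -conjXg permJ.
by exists k; rewrite -conjXg permJ.
Qed.

Definition constt_exp (pi : nat_pred) s := chinese #[s]%g`_pi #[s]%g`_pi^' 1 0.

Lemma consttE (pi : nat_pred) s : (s.`_pi)%g = (s ^+ constt_exp pi s)%g.
Proof. by []. Qed.

Lemma dvdn_card_porbit_order s x : #|porbit s x| %| #[s]%g.
Proof. by rewrite -permX_fix expg_order perm1. Qed.

Lemma coprime_constt_exp (pi : nat_pred) s x :
  coprime (constt_exp pi s) #|porbit s x|`_pi.
Proof.
apply: coprime_dvdr (partn_dvd _ (order_gt0 s) (dvdn_card_porbit_order s x)) _.
by rewrite /coprime -gcdn_modl chinese_modl ?coprime_partC // gcdn_modl gcd1n.
Qed.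

Lemma dvdn_constt_exp (pi : nat_pred) s x :
  #|porbit s x|`_pi^' %| constt_exp pi s.
Proof.
apply: dvdn_trans (partn_dvd _ (order_gt0 s) (dvdn_card_porbit_order s x)) _.
by rewrite /dvdn chinese_modr ?coprime_partC ?mod0n.
Qed.

Lemma card_porbit_constt (pi : nat_pred) s x :
  #|porbit (s.`_pi)%g x| = #|porbit s x|`_pi.
Proof.
have L_gt0 := card_porbit_gt0 s x.
rewrite consttE card_porbitX.
have -> : gcdn (constt_exp pi s) #|porbit s x| = #|porbit s x|`_pi^'.
  rewrite -{1}(partnC pi L_gt0) mulnC Gauss_gcdl ?coprime_constt_exp //.
  exact/gcdn_idPr/dvdn_constt_exp.
by rewrite -{1}(partnC pi L_gt0) mulnK.
Qed.

End PermCycles.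

Lemma imset_subset_inj (aT rT : finType) (f : aT -> rT) (A B : {set aT}) :
  injective f -> (f @: A \subset f @: B) = (A \subset B).
Proof.
move=> f_inj; apply/idP/idP => [/subsetP sub | /imsetS //].
by apply/subsetP => x xA; rewrite -(mem_imset _ _ f_inj) sub // imset_f.
Qed.

Lemma all_but_oneP (T : finType) (P : pred T) (b : bool) :
  reflect ((forall x y, ~~ P x -> ~~ P y -> x = y) /\ (b -> forall x, P x))
          (#|T| - ~~ b <= #|[set x | P x]|).
Proof.
set A := [set x | P x]; have cardA := cardsC A.
have -> : (#|T| - ~~ b <= #|A|) = (#|~: A| <= ~~ b) by apply/idP/idP; lia.
have notA x : (x \in ~: A) = ~~ P x by rewrite !inE.
case: b => /=.
- rewrite leqn0 cards_eq0; apply: (iffP eqP) => [A0 | [_ allP]].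
    have allP x : P x by apply/negPn; rewrite -notA A0 inE.
    by split=> [x y | _]; rewrite ?allP.
  by apply/setP => x; rewrite notA (allP isT x) inE.
- apply: (iffP card_le1_eqP) => [uniq1 | [uniq1 _] x y].
    by split=> // x y; rewrite -!notA => xA yA; apply: uniq1.
  by rewrite !notA => *; apply: uniq1.
Qed.

Section PorbitIndex.
Variable T : finType.
Implicit Types (s : {perm T}) (x y : T).

Definition porbit_index s x y := index y (traject s x #|porbit s x|).

Lemma porbit_index_lt s x y : y \in porbit s x -> porbit_index s x y < #|porbit s x|.
Proof. by rewrite porbit_traject -index_mem size_traject. Qed.

Lemma permX_porbit_index s x y : y \in porbit s x -> (s ^+ porbit_index s x y)%g x = y.
Proof.
move=> yx; rewrite permX -(nth_traject _ (porbit_index_lt yx)).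
by rewrite nth_index // -porbit_traject.
Qed.

Lemma porbit_indexX s x k : k < #|porbit s x| -> porbit_index s x ((s ^+ k)%g x) = k.
Proof.
move=> k_lt; rewrite /porbit_index permX -(nth_traject _ k_lt).
by rewrite index_uniq ?size_traject ?uniq_traject_porbit.
Qed.
End PorbitIndex.

Section OrbitMin.
Variables (w : nat) (s : {perm 'I_w}).
Implicit Types i j : 'I_w.

Lemma orbit_min_le i j : orbit_min w s i -> j \in porbit s i -> i <= j.
Proof. by move=> /forallP/(_ j)/implyP. Qed.

Lemma orbit_min_uniq i j :
  orbit_min w s i -> orbit_min w s j -> j \in porbit s i -> j = i.
Proof.
move=> i_min j_min ji; apply/val_inj/eqP.
by rewrite eqn_leq !orbit_min_le // porbit_sym.
Qed.

Definition porbit_min j := [arg min_(k < j in porbit s j) (k : nat)].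

Lemma porbit_min_spec j : porbit_min j \in porbit s j /\ orbit_min w s (porbit_min j).
Proof.
rewrite /porbit_min; case: arg_minnP; first exact: porbit_id.
move=> k kj k_min; split=> //; apply/forallP => k'; apply/implyP => k'k.
by apply: k_min; have /eqP <- : porbit s k == porbit s j by rewrite eq_porbit_mem.
Qed.

Lemma porbit_minE i j : orbit_min w s i -> (porbit_min j == i) = (j \in porbit s i).
Proof.
move=> i_min; have [jmin_j jmin_min] := porbit_min_spec j.
apply/eqP/idP => [<- | ji]; first by rewrite porbit_sym.
apply: orbit_min_uniq => //.
by have /eqP <- : porbit s j == porbit s i by rewrite eq_porbit_mem.
Qed.

Lemma porbit_porbit_min j : porbit s (porbit_min j) = porbit s j.
Proof. by apply/eqP; rewrite eq_porbit_mem; case: (porbit_min_spec j). Qed.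

Lemma porbit_min_perm j : porbit_min (s j) = porbit_min j.
Proof.
have [_ jmin_min] := porbit_min_spec j.
by apply/eqP; rewrite porbit_minE // porbit_porbit_min mem_porbit_perm porbit_id.
Qed.

Definition porbit_height j := porbit_index s (porbit_min j) j.

Lemma porbit_height_lt j : porbit_height j < #|porbit s j|.
Proof. by rewrite -porbit_porbit_min porbit_index_lt // porbit_porbit_min porbit_id. Qed.

Lemma permX_porbit_height j : (s ^+ porbit_height j)%g (porbit_min j) = j.
Proof. by rewrite permX_porbit_index // porbit_porbit_min porbit_id. Qed.

Lemma porbit_heightS j :
  ~~ orbit_min w s (s j) -> porbit_height (s j) = (porbit_height j).+1.
Proof.
move=> sj_nmin; have sjE : s j = (s ^+ (porbit_height j).+1)%g (porbit_min j).
  by rewrite expgSr permM permX_porbit_height.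
rewrite /porbit_height porbit_min_perm {1}sjE porbit_indexX // porbit_porbit_min.
rewrite ltn_neqAle porbit_height_lt andbT; apply: contra sj_nmin => /eqP ht.
have /eqP back : (s ^+ #|porbit s (porbit_min j)|)%g (porbit_min j) == porbit_min j.
  by rewrite permX_fix.
by rewrite sjE ht -porbit_porbit_min back; case: (porbit_min_spec j).
Qed.
End OrbitMin.

Lemma is_pcycleE p (x : {perm 'I_p}) a : is_pcycle p x = (#|porbit x a| == p).
Proof.
apply/existsP/eqP => [[b /eqP xb] | xa]; last by exists a; rewrite xa.
have : porbit x b = [set: 'I_p] by apply/eqP; rewrite eqEcard subsetT cardsT card_ord xb leqnn.
by move/setP/(_ a); rewrite in_setT -eq_porbit_mem => /eqP ->.
Qed.

Section Blocks.
Variables p w e : nat.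
Hypothesis p_pr : prime p.
Local Notation n := (p * w + e).
Let p_gt0 : 0 < p := prime_gt0 p_pr.
Implicit Types (x y : 'I_n) (j : 'I_w) (a : 'I_p).
Let a0 : 'I_p := Ordinal p_gt0.

Definition blk_of (x : 'I_n) := x %/ p.

Lemma mem_blk j x : (x \in blk p w e j) = (blk_of x == j).
Proof. by rewrite inE. Qed.

Lemma blk_of_lt x : (blk_of x < w) = (x < p * w).
Proof. by rewrite ltn_divLR // [w * p]mulnC. Qed.

Lemma blk_of_tail x y : x < p * w -> p * w <= y -> (blk_of x == blk_of y) = false.
Proof.
move=> x_lt y_ge; have y_blk : w <= blk_of y by rewrite leqNgt blk_of_lt -leqNgt.
by apply/negbTE; rewrite neq_ltn (leq_trans _ y_blk) // blk_of_lt.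
Qed.

Lemma pt_subproof (j : 'I_w) (a : 'I_p) : p * j + a < p * w.
Proof. by have := ltn_ord j; have := ltn_ord a; nia. Qed.

Definition pt j a : 'I_n := Ordinal (ltn_addr e (pt_subproof j a)).

Lemma pt_lt j a : pt j a < p * w.
Proof. exact: pt_subproof. Qed.

Lemma blk_of_pt j a : blk_of (pt j a) = j.
Proof. by rewrite /blk_of /= mulnC divnMDl // divn_small ?addn0. Qed.

Lemma pt_mod j a : pt j a %% p = a.
Proof. by rewrite /= mulnC modnMDl modn_small. Qed.

Lemma pt_inj j : injective (pt j).
Proof. by move=> a b /(congr1 (fun x : 'I_n => x %% p)); rewrite !pt_mod => /val_inj. Qed.

Lemma blk_of_nontail x j : blk_of x = j -> x < p * w.
Proof. by move=> xj; rewrite -blk_of_lt xj ltn_ord. Qed.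

Lemma blk_ofP x : x < p * w -> exists j, blk_of x = j.
Proof. by rewrite -blk_of_lt => x_lt; exists (Ordinal x_lt). Qed.

Lemma pt_blk_of j x : blk_of x = j -> x = pt j (Ordinal (ltn_pmod x p_gt0)).
Proof. by move=> xj; apply: val_inj; rewrite /= -xj /blk_of [p * (_ %/ _)]mulnC -divn_eq. Qed.

Lemma ptP x : x < p * w -> exists j a, x = pt j a.
Proof.
rewrite -blk_of_lt => x_lt.
by exists (Ordinal x_lt), (Ordinal (ltn_pmod x p_gt0)); apply: pt_blk_of.
Qed.

Lemma card_blk j : #|blk p w e j| = p.
Proof.
have -> : blk p w e j = pt j @: setT.
  apply/setP => x; rewrite mem_blk; apply/eqP/imsetP => [/pt_blk_of -> | [a _ ->]].
    by exists (Ordinal (ltn_pmod x p_gt0)).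
  exact: blk_of_pt.
by rewrite card_imset ?cardsT ?card_ord //; apply: pt_inj.
Qed.

Lemma wr_elt_pt g xs sg i a :
  wr_elt p w e g xs sg -> g (pt i a) = pt (sg i) (xs (sg i) a).
Proof.
case/andP=> _ /forallP/(_ i)/forallP/(_ a)/forallP/(_ (pt i a)).
by rewrite eqxx => /eqP g_pt; apply: val_inj.
Qed.

Definition fixes_tail (g : {perm 'I_n}) := forall x, p * w <= x -> g x = x.

Lemma fixes_tail_lt g x : fixes_tail g -> (g x < p * w) = (x < p * w).
Proof.
move=> gT; case: (ltnP x (p * w)) => [x_lt | x_ge]; last by rewrite gT // ltnNge x_ge.
apply: contraTT x_lt; rewrite -!leqNgt => gx_ge.
by have := gT _ gx_ge => /perm_inj <-.
Qed.

Lemma wr_fix g : g \in wr p w e -> fixes_tail g.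
Proof. by rewrite inE => /andP[/forallP gT _] x /(implyP (gT x))/eqP. Qed.

Lemma wr_lt g x : g \in wr p w e -> (g x < p * w) = (x < p * w).
Proof. by move/wr_fix/fixes_tail_lt. Qed.

Lemma fixes_tail_blk_of g : fixes_tail g ->
    (forall x y, x < p * w -> y < p * w ->
       (blk_of (g x) == blk_of (g y)) = (blk_of x == blk_of y)) ->
  forall x y, (blk_of (g x) == blk_of (g y)) = (blk_of x == blk_of y).
Proof.
move=> gT gB x y; have gL := fixes_tail_lt _ gT.
case: (ltnP x (p * w)) => x_lt; case: (ltnP y (p * w)) => y_lt; first exact: gB.
- by rewrite (gT y) // !blk_of_tail ?gL.
- by rewrite (gT x) // !(eq_sym (blk_of x)) !blk_of_tail ?gL.
- by rewrite !gT.
Qed.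

Lemma wr_blk_of g x y :
  g \in wr p w e -> (blk_of (g x) == blk_of (g y)) = (blk_of x == blk_of y).
Proof.
move=> gW; apply: fixes_tail_blk_of (wr_fix gW) _ x y => {}x {}y x_lt _.
have [j xj] := blk_ofP x_lt.
have : g @: blk p w e j \in [set g @: B | B : {set 'I_n} in blk_family p w e].
  by apply: imset_f; apply: imset_f.
move: gW; rewrite inE => /andP[_ /eqP ->] /imsetP[j' _ gj].
have gxj' : blk_of (g x) = j'.
  by apply/eqP; rewrite -mem_blk -gj mem_imset ?mem_blk ?xj //; apply: perm_inj.
by rewrite gxj' xj !(eq_sym (nat_of_ord _)) -!mem_blk -gj mem_imset //; apply: perm_inj.
Qed.

Lemma mem_wr g : fixes_tail g ->
    (forall x y, x < p * w -> y < p * w ->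
       (blk_of (g x) == blk_of (g y)) = (blk_of x == blk_of y)) ->
  g \in wr p w e.
Proof.
move=> gT /(fixes_tail_blk_of gT) gB; rewrite inE; apply/andP; split.
  by apply/forallP => x; apply/implyP => /gT ->.
rewrite eqEcard (card_imset _ (imset_inj (@perm_inj _ g))) leqnn andbT.
apply/subsetP => _ /imsetP[_ /imsetP[i _ ->] ->].
have gi_lt : blk_of (g (pt i a0)) < w by rewrite blk_of_lt fixes_tail_lt ?pt_lt.
apply/imsetP; exists (Ordinal gi_lt) => //; apply/setP => y.
rewrite -[y](permKV g) mem_imset; last exact: perm_inj.
by rewrite !mem_blk /= gB blk_of_pt.
Qed.

Lemma wr_group_set : group_set (wr p w e).
Proof.
apply/group_setP; split=> [|g h gW hW].
  by apply: mem_wr => [x _ | x y _ _]; rewrite !perm1.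
apply: mem_wr => [x x_ge | x y _ _]; first by rewrite permM (wr_fix gW x_ge) (wr_fix hW x_ge).
by rewrite !permM (wr_blk_of _ _ hW) (wr_blk_of _ _ gW).
Qed.

Canonical wr_group := group wr_group_set.

Definition respects_blocks (c : {perm 'I_n}) :=
  (forall x, x < p * w -> c x < p * w) /\
  (forall x y, x < p * w -> y < p * w ->
     (blk_of (c x) == blk_of (c y)) = (blk_of x == blk_of y)).

Lemma mem_wr_symE c : c \in (wr p w e * symE p w e)%g <-> respects_blocks c.
Proof.
have symE_fix b x : b \in symE p w e -> x < p * w -> b x = x.
  by rewrite inE => /forallP/(_ x)/implyP bP /bP/eqP.
split=> [/mulsgP[a b aW bE ->] | [cL cB]].
  by split=> [x | x y] *; rewrite !permM !(symE_fix b) ?wr_lt ?wr_blk_of.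
set S := [set x : 'I_n | x < p * w].
have cS : c @: S = S.
  apply/eqP; rewrite eqEcard card_imset ?leqnn ?andbT; last exact: perm_inj.
  by apply/subsetP => _ /imsetP[x xS ->]; rewrite inE cL //; rewrite inE in xS.
have cN : c \in 'N(S | 'P)%g.
  by apply/astabsP => x; rewrite /= /aperm -{1}cS mem_imset //; apply: perm_inj.
set a := restr_perm S c.
have aE x : x < p * w -> a x = c x by move=> x_lt; rewrite restr_permE // inE.
have aW : a \in wr p w e.
  apply: mem_wr => [x x_ge | x y x_lt y_lt]; last by rewrite !aE ?cB.
  by rewrite (out_perm (restr_perm_on S c)) // inE -leqNgt.
rewrite -(mulKVg a c); apply: mem_mulg => //; rewrite inE.
apply/forallP => x; apply/implyP => x_lt; rewrite permM -aE ?permKV //.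
by move: (perm_closed x (perm_onV (restr_perm_on S c))); rewrite !inE => ->.
Qed.

Lemma calWE g :
  g \in calW p w e <-> g \in wr p w e /\ {in 'C[(g.`_p)%g]%g, forall c, respects_blocks c}.
Proof.
rewrite inE; split=> [/andP[gW /subsetP gC] | [-> gC]].
  by split=> // c /gC/mem_wr_symE.
by apply/subsetP => c /gC/mem_wr_symE.
Qed.

Section FullBlocks.
Variable g : {perm 'I_n}.
Hypothesis gW : g \in wr p w e.

Lemma blk_perm_subproof j : blk_of (g (pt j a0)) < w.
Proof. by rewrite blk_of_lt wr_lt ?pt_lt. Qed.

Lemma blk_perm_inj : injective (fun j => Ordinal (blk_perm_subproof j)).
Proof.
move=> j j' /(congr1 val)/eqP; rewrite /= wr_blk_of // !blk_of_pt => /eqP.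
exact: val_inj.
Qed.

Definition blk_perm := perm blk_perm_inj.

Lemma blk_of_perm x j : blk_of x = j -> blk_of (g x) = blk_perm j.
Proof. by move=> xj; rewrite permE; apply/eqP; rewrite /= wr_blk_of // blk_of_pt xj. Qed.

Lemma blk_of_permX x j k : blk_of x = j -> blk_of ((g ^+ k)%g x) = (blk_perm ^+ k)%g j.
Proof.
move=> xj; elim: k => [|k IHk]; first by rewrite !expg0 !perm1.
by rewrite !expgSr !permM; apply: blk_of_perm.
Qed.

Local Notation m j := #|porbit blk_perm j|.

Lemma blk_of_permX_eq x j k : blk_of x = j -> (blk_of ((g ^+ k)%g x) == j) = (m j %| k).
Proof. by move=> xj; rewrite (blk_of_permX _ xj) -permX_fix. Qed.

Lemma dvdn_card_porbit_blk x j : blk_of x = j -> m j %| #|porbit g x|.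
Proof.
move=> xj; rewrite -(blk_of_permX_eq _ xj).
have /eqP -> : ((g ^+ #|porbit g x|)%g x == x) by rewrite permX_fix.
by rewrite xj.
Qed.

Lemma porbit_permX_blk x j : blk_of x = j ->
  porbit (g ^+ m j)%g x = porbit g x :&: blk p w e j.
Proof.
move=> xj; apply/setP => y; rewrite inE mem_blk; apply/idP/andP.
  case/porbitP => t ->; rewrite -expgM mem_porbit.
  by rewrite blk_of_permX_eq // dvdn_mulr.
case=> /porbitP[k ->]; rewrite blk_of_permX_eq // => /dvdnP[q ->].
by rewrite [q * _]mulnC expgM mem_porbit.
Qed.

Lemma card_porbit_blk x j : blk_of x = j ->
  #|porbit g x :&: blk p w e j| = #|porbit g x| %/ m j.
Proof.
move=> xj; rewrite -porbit_permX_blk // card_porbitX.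
by congr (_ %/ _); apply/gcdn_idPl; apply: dvdn_card_porbit_blk xj.
Qed.

Definition full_blk j := blk p w e j \subset porbit g (pt j a0).

Lemma full_blkE x j : blk_of x = j -> full_blk j = (blk p w e j \subset porbit g x).
Proof.
by move=> xj; apply: subset_porbitE; rewrite mem_blk ?xj ?blk_of_pt.
Qed.

Lemma full_blkI x j : blk_of x = j ->
  full_blk j = (#|porbit g x :&: blk p w e j| == p).
Proof.
move=> xj; have := (subset_leqif_cards (subsetIr (porbit g x) (blk p w e j))).2.
by rewrite card_blk (full_blkE xj) => ->; apply/setIidPr/eqP.
Qed.

Lemma full_blk_card x j : blk_of x = j -> full_blk j = (#|porbit g x| == m j * p).
Proof.
move=> xj; have m_dvd := dvdn_card_porbit_blk xj.
rewrite (full_blkI xj) card_porbit_blk // -(divnK m_dvd) mulnK ?card_porbit_gt0 //.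
by rewrite [_ * m j]mulnC eqn_pmul2l ?card_porbit_gt0.
Qed.

Lemma full_blk_permX j k : full_blk ((blk_perm ^+ k)%g j) = full_blk j.
Proof.
have xj := blk_of_pt j a0; have gx := blk_of_permX k xj.
by rewrite (full_blk_card gx) (full_blk_card xj) !porbit_perm.
Qed.

Local Notation z := (g.`_p)%g.

Lemma porbit_constt_full x j : blk_of x = j -> full_blk j ->
  porbit (z ^+ (#|porbit z x| %/ p))%g x = blk p w e j.
Proof.
move=> xj full_j; have m_gt0 := card_porbit_gt0 blk_perm j.
have L_mp : #|porbit g x| = m j * p by apply/eqP; rewrite -full_blk_card.
have z_mp : #|porbit z x| = (m j)`_p * p.
  by rewrite card_porbit_constt L_mp partnM // (part_pnat_id (pnat_id p_pr)).
apply/eqP; rewrite z_mp mulnK // eqEcard card_blk card_porbitX z_mp.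
rewrite (gcdn_idPl (dvdn_mulr _ (dvdnn _))) mulKn // leqnn andbT.
apply/subsetP => _ /porbitP[t ->]; rewrite mem_blk consttE -!expgM blk_of_permX_eq //.
rewrite -{1}(partnC p m_gt0) mulnC mulnA; apply: dvdn_mulr; apply: dvdn_mul => //.
have m'_dvd_L' := partn_dvd p^' (card_porbit_gt0 g x) (dvdn_card_porbit_blk xj).
exact: dvdn_trans m'_dvd_L' (dvdn_constt_exp _ _ _).
Qed.

Lemma constt_nonfull_fix x j k : blk_of x = j -> ~~ full_blk j ->
  (z ^+ k)%g x \in blk p w e j -> (z ^+ k)%g x = x.
Proof.
move=> xj nfull_j zk_blk.
have m_dvd : m j %| constt_exp p g * k.
  by move: zk_blk; rewrite mem_blk consttE -expgM blk_of_permX_eq.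
have m_gt0 := card_porbit_gt0 blk_perm j.
have m_dvd_L := dvdn_card_porbit_blk xj.
(* The cycle of x meets block j in r < p points, so r is prime to p. *)
set r := #|porbit g x| %/ m j.
have L_rm : #|porbit g x| = r * m j by rewrite divnK.
have r_gt0 : 0 < r by rewrite divn_gt0 // dvdn_leq ?card_porbit_gt0.
have r_lt : r < p.
  rewrite ltn_neqAle; apply/andP; split.
    by apply: contra nfull_j => /eqP r_p; rewrite (full_blk_card xj) L_rm r_p mulnC.
  rewrite /r -card_porbit_blk //.
  by apply: leq_trans (subset_leq_card (subsetIr _ _)) _; rewrite card_blk.
have Lp : #|porbit g x|`_p = (m j)`_p.
  by rewrite L_rm partnM // part_p'nat ?mul1n // p'natE // gtnNdvd.
apply/eqP; rewrite permX_fix card_porbit_constt Lp.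
rewrite -(@Gauss_dvdr _ (constt_exp p g)); last by rewrite coprime_sym -Lp coprime_constt_exp.
exact: dvdn_trans (dvdn_part _ _) m_dvd.
Qed.

Lemma constt_wr : z \in wr p w e.
Proof. exact: groupX. Qed.

Lemma constt_full_moved x j : blk_of x = j -> full_blk j -> z x != x.
Proof.
move=> xj full_j; apply/eqP => zx.
have card1 (s : {perm 'I_n}) : s x = x -> #|porbit s x| = 1.
  by move=> sx; apply/eqP; rewrite -dvdn1 -permX_fix expg1 sx.
have := porbit_constt_full xj full_j.
rewrite card1 // divn_small ?prime_gt1 // expg0 => blk_eq.
have := card_blk j; rewrite -blk_eq card1 ?perm1 // => p1.
by move: (prime_gt1 p_pr); rewrite -p1.
Qed.

Lemma blk_other x j : blk_of x = j -> exists2 y, blk_of y = j & y != x.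
Proof.
move=> xj; have := cardsD1 x (blk p w e j).
rewrite card_blk mem_blk xj eqxx /= => card_rest.
have /set0Pn[y] : blk p w e j :\ x != set0.
  by rewrite -card_gt0 -(ltn_add2l 1) -card_rest prime_gt1.
by rewrite !inE => /andP[yx /eqP yj]; exists y.
Qed.

Section Necessity.
Hypothesis respectsC : {in 'C[z]%g, forall c, respects_blocks c}.

Lemma cent_nonfull_fix x j : blk_of x = j -> ~~ full_blk j -> z x = x.
Proof.
move=> xj nfull_j; apply/eqP/negPn/negP => zx_moved.
have [y yj yx] := blk_other xj.
have zx_blk : blk_of (z x) != j.
  apply: contra zx_moved => /eqP zxj; apply/eqP.
  by have := constt_nonfull_fix (k := 1) xj nfull_j; rewrite expg1 mem_blk zxj; apply.
have y_out : y \notin porbit z x.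
  apply: contra yx => /porbitP[k yk]; rewrite yk (constt_nonfull_fix xj nfull_j) //.
  by rewrite -yk mem_blk yj.
(* The restriction of z to the cycle of x centralises z, moves x out of its
   block and fixes y. *)
set c := restr_perm (porbit z x) z.
have cC : c \in 'C[z]%g by apply/cent1P; apply: restr_perm_commute.
have [_ cB] := respectsC cC.
have := cB x y; rewrite -!blk_of_lt xj yj ltn_ord eqxx => /(_ isT isT).
rewrite restr_permE ?porbit_astabs ?porbit_id // (out_perm (restr_perm_on _ _)) // yj.
by rewrite (negbTE zx_blk).
Qed.

Lemma cent_nonfull_unique j1 j2 : ~~ full_blk j1 -> ~~ full_blk j2 -> j1 = j2.
Proof.
move=> nfull1 nfull2; apply/eqP/negPn/negP => j12.
have x1j := blk_of_pt j1 a0; have x2j := blk_of_pt j2 a0.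
have [y1 y1j y1x1] := blk_other x1j.
have y1x2 : pt j2 a0 != y1.
  by apply: contra j12 => /eqP x2y1; apply/eqP/ord_inj; rewrite -x2j x2y1 y1j.
have cC : tperm (pt j1 a0) (pt j2 a0) \in 'C[z]%g.
  apply/cent1P/commute_tperm; first exact: cent_nonfull_fix x1j nfull1.
  exact: cent_nonfull_fix x2j nfull2.
have [_ cB] := respectsC cC.
have := cB _ _ (pt_lt j1 a0) (blk_of_nontail y1j).
have x1y1 : pt j1 a0 != y1 by rewrite eq_sym.
rewrite tpermL (tpermD x1y1 y1x2) x1j x2j y1j eqxx => /eqP/ord_inj j21.
by rewrite j21 eqxx in j12.
Qed.

Lemma cent_full_of_tail : 0 < e -> forall j, full_blk j.
Proof.
move=> e_gt0 j; apply/negPn/negP => nfull_j.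
have t_lt : p * w < n by rewrite -{1}[p * w]addn0 ltn_add2l.
have cC : tperm (pt j a0) (Ordinal t_lt) \in 'C[z]%g.
  apply/cent1P/commute_tperm; first exact: cent_nonfull_fix (blk_of_pt j a0) nfull_j.
  exact: (wr_fix constt_wr).
have [cL _] := respectsC cC.
by have := cL _ (pt_lt j a0); rewrite tpermL /= ltnn.
Qed.
End Necessity.

Section Sufficiency.
Hypothesis nonfull_unique : forall j1 j2, ~~ full_blk j1 -> ~~ full_blk j2 -> j1 = j2.
Hypothesis full_of_tail : 0 < e -> forall j, full_blk j.

Lemma full_blk_moved x j : blk_of x = j -> full_blk j = (z x != x).
Proof.
move=> xj; apply/idP/idP => [/(constt_full_moved xj) // | ]; apply: contraLR => nfull_j.
have zxj : blk_of (z x) = j.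
  rewrite consttE (blk_of_permX _ xj); congr nat_of_ord.
  by apply: nonfull_unique; rewrite ?full_blk_permX.
have := constt_nonfull_fix (k := 1) xj nfull_j.
by rewrite expg1 mem_blk zxj eqxx => /(_ isT) ->; rewrite eqxx.
Qed.

Lemma cent_full_blk c x j j' : c \in 'C[z]%g -> blk_of x = j -> blk_of (c x) = j' ->
  full_blk j' = full_blk j.
Proof.
by move=> /cent1P cz xj cxj'; rewrite (full_blk_moved xj) (full_blk_moved cxj') commute_fixE.
Qed.

Lemma cent_lt c x : c \in 'C[z]%g -> x < p * w -> c x < p * w.
Proof.
move=> /cent1P cz x_lt; have [j xj] := blk_ofP x_lt.
case: (boolP (full_blk j)) => [full_j | nfull_j].
  have := constt_full_moved xj full_j; rewrite -(commute_fixE _ cz).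
  by apply: contraR; rewrite -leqNgt => /(wr_fix constt_wr) ->; rewrite eqxx.
have e0 : e = 0.
  by apply/eqP; rewrite eqn0Ngt; apply/negP => /full_of_tail/(_ j); apply/negP.
by apply: leq_trans (ltn_ord (c x)) _; rewrite e0 addn0.
Qed.

Lemma cent_blk_of c x y : c \in 'C[z]%g -> x < p * w -> blk_of x = blk_of y ->
  blk_of (c x) = blk_of (c y).
Proof.
move=> cC x_lt xy; have /cent1P cz := cC.
have [j xj] := blk_ofP x_lt; have yj : blk_of y = j by rewrite -xy.
have [j' cxj'] := blk_ofP (cent_lt cC x_lt).
have [j'' cyj''] := blk_ofP (cent_lt cC (blk_of_nontail yj)).
case: (boolP (full_blk j)) => [full_j | nfull_j]; last first.
  rewrite cxj' cyj''; congr nat_of_ord; apply: nonfull_unique.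
    by rewrite (cent_full_blk cC xj cxj').
  by rewrite (cent_full_blk cC yj cyj'').
have full_j' : full_blk j' by rewrite (cent_full_blk cC xj cxj').
have zc : #|porbit z (c x)| = #|porbit z x|.
  by rewrite porbit_commute // card_imset //; apply: perm_inj.
have := porbit_constt_full cxj' full_j'; rewrite zc => blk_j'.
have : y \in blk p w e j by rewrite mem_blk yj.
rewrite -(porbit_constt_full xj full_j) => /porbitP[t ->].
rewrite commute_permX; last exact: commuteX.
have := mem_porbit (z ^+ (#|porbit z x| %/ p))%g t (c x).
by rewrite blk_j' mem_blk cxj' => /eqP ->.
Qed.

Lemma cent_respects c : c \in 'C[z]%g -> respects_blocks c.
Proof.
move=> cC; split=> [x | x y x_lt y_lt]; first exact: cent_lt.
apply/eqP/eqP => [cxy | /(cent_blk_of cC x_lt) //].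
by have := cent_blk_of (groupVr cC) (cent_lt cC x_lt) cxy; rewrite !permK.
Qed.
End Sufficiency.

Lemma calW_full : (g \in calW p w e) = (w - (e == 0) <= #|[set j | full_blk j]|).
Proof.
rewrite eqn0Ngt -[X in X - _ <= _](card_ord w); apply/idP/all_but_oneP.
  case/calWE => _ respectsC.
  by split; [exact: cent_nonfull_unique | exact: cent_full_of_tail].
case=> nonfull_unique full_of_tail; apply/calWE; split=> // c.
exact: cent_respects.
Qed.

Lemma wr_elt_blk_perm xs sg : wr_elt p w e g xs sg -> sg = blk_perm.
Proof.
move=> g_xs; apply/permP => i; apply: val_inj.
by rewrite permE /= (wr_elt_pt _ _ g_xs) blk_of_pt.
Qed.

Lemma wr_eltP : exists xs, wr_elt p w e g xs blk_perm.
Proof.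
pose lab j a : 'I_p := Ordinal (ltn_pmod (g (pt (blk_perm^-1 j)%g a)) p_gt0).
have labE j a : g (pt (blk_perm^-1 j)%g a) = pt j (lab j a).
  by apply: pt_blk_of; rewrite (blk_of_perm (blk_of_pt _ _)) permKV.
have lab_inj j : injective (lab j).
  move=> a b lab_ab; apply/(pt_inj (j := (blk_perm^-1 j)%g))/(@perm_inj _ g).
  by rewrite !labE lab_ab.
exists [ffun j => perm (lab_inj j)]; apply/andP; split.
  by apply/forallP => x; apply/implyP => /(wr_fix gW) ->.
apply/forallP => i; apply/forallP => a; apply/forallP => x; apply/implyP => /eqP xE.
have -> : x = pt i a by apply: val_inj.
by have := labE (blk_perm i) a; rewrite permK => ->; rewrite ffunE !permE.
Qed.

Lemma blk_perm_img j : g @: blk p w e j = blk p w e (blk_perm j).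
Proof.
apply/setP => y; rewrite -[y](permKV g) mem_imset ?mem_blk; last exact: perm_inj.
have -> : nat_of_ord (blk_perm j) = blk_of (g (pt j a0)) by rewrite permE.
by rewrite wr_blk_of // blk_of_pt.
Qed.

Section NormalForm.
Variable xs : {ffun 'I_w -> {perm 'I_p}}.
Hypothesis g_xs : wr_elt p w e g xs blk_perm.
Hypothesis xs_nonmin : forall i, ~~ orbit_min w blk_perm i -> xs i = 1%g.

Lemma permX_pt_lt i a t : orbit_min w blk_perm i -> t < m i ->
  (g ^+ t)%g (pt i a) = pt ((blk_perm ^+ t)%g i) a.
Proof.
move=> i_min; elim: t => [|t IHt] t_lt; first by rewrite !expg0 !perm1.
rewrite !expgSr !permM IHt ?(ltnW t_lt) // (wr_elt_pt _ _ g_xs) -permM -expgSr.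
rewrite xs_nonmin ?perm1 //; apply: contraTN t_lt => t_min.
have := orbit_min_uniq i_min t_min (mem_porbit _ _ _) => /eqP.
by rewrite permX_fix -leqNgt => /(dvdn_leq (ltn0Sn t)).
Qed.

Lemma permX_pt_card i a : orbit_min w blk_perm i -> (g ^+ m i)%g (pt i a) = pt i (xs i a).
Proof.
move=> i_min; have m_gt0 := card_porbit_gt0 blk_perm i.
rewrite -(prednK m_gt0) expgSr permM permX_pt_lt ?prednK // (wr_elt_pt _ _ g_xs).
rewrite -permM -expgSr prednK //.
by have /eqP -> : ((blk_perm ^+ m i)%g i == i) by rewrite permX_fix.
Qed.

Lemma permX_pt_cycle i a t : orbit_min w blk_perm i ->
  (g ^+ (m i * t))%g (pt i a) = pt i ((xs i ^+ t)%g a).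
Proof.
move=> i_min; elim: t a => [|t IHt] a; first by rewrite muln0 !expg0 !perm1.
by rewrite mulnS expgD permM permX_pt_card // IHt expgS permM.
Qed.

Lemma full_blk_min i : orbit_min w blk_perm i -> full_blk i = is_pcycle p (xs i).
Proof.
move=> i_min; have xi := blk_of_pt i a0.
rewrite (full_blkI xi) -porbit_permX_blk // (is_pcycleE _ a0).
suff -> : porbit (g ^+ m i)%g (pt i a0) = pt i @: porbit (xs i) a0.
  by rewrite card_imset //; apply: pt_inj.
apply/setP => y; apply/porbitP/imsetP => [[t ->] | [b /porbitP[t ->] ->]].
  by rewrite -expgM permX_pt_cycle //; exists ((xs i ^+ t)%g a0); rewrite ?mem_porbit.
by exists t; rewrite -expgM permX_pt_cycle.
Qed.

Lemma full_blk_porbit_min j : full_blk j = is_pcycle p (xs (porbit_min blk_perm j)).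
Proof.
have [_ min_min] := porbit_min_spec blk_perm j.
by rewrite -{1}(permX_porbit_height blk_perm j) full_blk_permX full_blk_min.
Qed.

Lemma sum_full_blk :
  \sum_(i | orbit_min w blk_perm i && is_pcycle p (xs i)) m i = #|[set j | full_blk j]|.
Proof.
have -> : #|[set j | full_blk j]| = \sum_j (is_pcycle p (xs (porbit_min blk_perm j)) : nat).
  rewrite -sum1_card big_mkcond /=; apply: eq_bigr => j _.
  by rewrite inE full_blk_porbit_min; case: is_pcycle.
rewrite [RHS](partition_big (porbit_min blk_perm) (orbit_min w blk_perm)) /=; last first.
  by move=> j _; case: (porbit_min_spec blk_perm j).
rewrite big_mkcondr /=; apply: eq_bigr => i i_min.
rewrite (eq_bigr (fun _ => is_pcycle p (xs i) : nat)) => [|j /eqP -> //].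
rewrite sum_nat_const (@eq_card _ _ (porbit blk_perm i)) => [|j]; last exact: porbit_minE.
by case: is_pcycle; rewrite ?muln1 ?muln0.
Qed.
End NormalForm.
End FullBlocks.

Lemma full_blkJ g k (kW : k \in wr p w e) j :
  full_blk (g ^ k)%g (blk_perm kW j) = full_blk g j.
Proof.
have kxj := blk_of_perm kW (blk_of_pt j a0).
by rewrite (full_blkE _ kxj) porbitJ -blk_perm_img imset_subset_inj //; apply: perm_inj.
Qed.

Lemma card_full_blkJ g k : k \in wr p w e ->
  #|[set j | full_blk (g ^ k)%g j]| = #|[set j | full_blk g j]|.
Proof.
move=> kW; rewrite -[RHS](card_imset _ (@perm_inj _ (blk_perm kW))); apply: eq_card => j.
rewrite inE -[j](permKV (blk_perm kW)) mem_imset ?inE ?full_blkJ //; exact: perm_inj.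
Qed.

Section Conjugator.
Variable h : {perm 'I_n}.
Hypothesis hW : h \in wr p w e.
Local Notation sigma := (blk_perm hW).

(* Point a of block j is sent to the image under h ^+ t of point a of the
   minimal block of its sigma-cycle, t being the height of j in that cycle;
   conjugating h by the inverse makes h map point a of j to point a of sigma j
   unless sigma j is minimal. *)
Definition conj_fun (x : 'I_n) : 'I_n :=
  if insub (blk_of x) is Some j then
    (h ^+ porbit_height sigma j)%g (pt (porbit_min sigma j) (Ordinal (ltn_pmod x p_gt0)))
  else x.

Lemma conj_fun_pt j a :
  conj_fun (pt j a) = (h ^+ porbit_height sigma j)%g (pt (porbit_min sigma j) a).
Proof.
rewrite /conj_fun blk_of_pt valK.
by congr (fun_of_perm _ (pt _ _)); apply: val_inj; rewrite /= pt_mod.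
Qed.

Lemma conj_fun_tail x : p * w <= x -> conj_fun x = x.
Proof. by move=> x_ge; rewrite /conj_fun insubN // blk_of_lt -leqNgt. Qed.

Lemma blk_of_conj_fun x : blk_of (conj_fun x) = blk_of x.
Proof.
case: (ltnP x (p * w)) => [/ptP[j [a ->]] | /conj_fun_tail -> //].
by rewrite conj_fun_pt (blk_of_permX hW _ (blk_of_pt _ _)) permX_porbit_height blk_of_pt.
Qed.

Lemma conj_fun_inj : injective conj_fun.
Proof.
move=> x y eq_xy; have := blk_of_conj_fun x; rewrite eq_xy blk_of_conj_fun => eq_blk.
case: (ltnP x (p * w)) => x_lt; case: (ltnP y (p * w)) => y_lt.
- move: eq_xy eq_blk; case/ptP: x_lt => j [a ->]; case/ptP: y_lt => j' [b ->].
  by rewrite !blk_of_pt => + /ord_inj jj'; rewrite -jj' !conj_fun_pt => /perm_inj/pt_inj ->.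
- by move: eq_blk => /esym/eqP; rewrite blk_of_tail.
- by move: eq_blk => /eqP; rewrite blk_of_tail.
- by move: eq_xy; rewrite !conj_fun_tail.
Qed.

Definition conj_perm := perm conj_fun_inj.

Lemma conj_perm_wr : conj_perm \in wr p w e.
Proof.
apply: mem_wr => [x x_ge | x y _ _]; first by rewrite permE conj_fun_tail.
by rewrite !permE !blk_of_conj_fun.
Qed.

Lemma blk_of_conj_perm x : blk_of (conj_perm x) = blk_of x.
Proof. by rewrite permE blk_of_conj_fun. Qed.

Lemma blk_of_conj_permV x : blk_of ((conj_perm^-1)%g x) = blk_of x.
Proof. by rewrite -blk_of_conj_perm permKV. Qed.

Lemma conj_perm_normal j a : ~~ orbit_min w sigma (sigma j) ->
  (h ^ conj_perm^-1)%g (pt j a) = pt (sigma j) a.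
Proof.
move=> sj_nmin; rewrite conjgE invgK !permM.
suff -> : h (conj_perm (pt j a)) = conj_perm (pt (sigma j) a) by rewrite permK.
by rewrite !(permE conj_fun_inj) !conj_fun_pt porbit_heightS // porbit_min_perm expgSr permM.
Qed.

Lemma normal_form : exists k xs sg, [/\ k \in wr p w e, wr_elt p w e (h ^ k)%g xs sg &
  forall i, ~~ orbit_min w sg i -> xs i = 1%g].
Proof.
have kW : (conj_perm^-1)%g \in wr p w e by rewrite groupV conj_perm_wr.
have hkW := groupJ hW kW; have [xs hk_xs] := wr_eltP hkW.
have sigmaE : blk_perm hkW = sigma.
  apply/permP => j; apply/ord_inj.
  rewrite -(blk_of_perm hkW (blk_of_pt j a0)) conjgE invgK !permM blk_of_conj_permV.
  by rewrite (blk_of_perm hW (etrans (blk_of_conj_perm _) (blk_of_pt j a0))).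
rewrite sigmaE in hk_xs; exists conj_perm^-1%g, xs, sigma; split=> // i i_nmin.
apply/permP => a; rewrite perm1; apply: (@pt_inj i).
have := conj_perm_normal (j := (sigma^-1 i)%g) a; rewrite permKV => /(_ i_nmin) <-.
by rewrite (wr_elt_pt _ _ hk_xs) permKV.
Qed.
End Conjugator.

Lemma sum_full_blkJ h k xs sg : h \in wr p w e -> k \in wr p w e ->
    wr_elt p w e (h ^ k)%g xs sg -> (forall i, ~~ orbit_min w sg i -> xs i = 1%g) ->
  \sum_(i | orbit_min w sg i && is_pcycle p (xs i)) #|porbit sg i| =
    #|[set j | full_blk h j]|.
Proof.
move=> hW kW hk_xs xs_nonmin; have hkW := groupJ hW kW.
have sgE := wr_elt_blk_perm hkW hk_xs; subst sg.
by rewrite (sum_full_blk hk_xs xs_nonmin) card_full_blkJ.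
Qed.

Lemma mem_Uset h s :
  (h \in Uset p w e s) = (h \in wr p w e) && (s <= #|[set j | full_blk h j]|).
Proof.
rewrite inE; case hW: (h \in wr p w e) => //=.
apply/existsP/idP => [[k] | s_le].
  case/andP=> kW /existsP[xs /existsP[sg /and3P[hk_xs /forallP nmin s_le]]].
  have xs_nonmin i : ~~ orbit_min w sg i -> xs i = 1%g by move/(implyP (nmin i))/eqP.
  by rewrite -(sum_full_blkJ hW kW hk_xs xs_nonmin).
have [k [xs [sg [kW hk_xs xs_nonmin]]]] := normal_form hW.
exists k; rewrite kW; apply/existsP; exists xs; apply/existsP; exists sg.
rewrite hk_xs (sum_full_blkJ hW kW hk_xs xs_nonmin) s_le andbT.
by apply/forallP => i; apply/implyP => /xs_nonmin ->.
Qed.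
End Blocks.

Lemma calW_Uset p w e : prime p -> calW p w e = Uset p w e (w - (e == 0)).
Proof.
move=> p_pr; apply/setP => g; rewrite mem_Uset //.
case gW: (g \in wr p w e); first exact: calW_full.
by rewrite inE gW.
Qed.

Unset Implicit Arguments.
Set Strict Implicit.

Theorem lemma3p1 (p w e : nat) : prime p ->
  (e = 0 -> calW p w e = Uset p w e (w - 1)) /\
  (0 < e -> calW p w e = Uset p w e w).
Proof.
move=> p_pr; split=> [e0 | e_gt0]; rewrite calW_Uset //; first by subst e.
by rewrite eqn0Ngt e_gt0 subn0.
Qed.
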